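(* Let $P\in\mathfrak N_2$ and let $R$ be a retract of $P$ of width three which is a tower of nice sections. If $S$ is an ordinal summand of $R$ (in its decomposition into nice sections) which is a nice section of width three, then $S=P(k\to\ell)$ for some level indices $k<\ell$ of $P$.
   Context: All posets are finite; $h_P$ is the height; level sets $P(0)=\min P$, $P(k+1)=\min(P\setminus\bigcup_{i\le k}P(i))$; $P(k\to\ell)=\bigcup_{i=k}^\ell P(i)$ as induced subposet; $A<B$ means $a<b$ for all $a\in A,b\in B$. A retract is the image of an idempotent order-preserving self-map. A section is either a 2-element antichain or a poset $P$ of height $h_P\ge1$ with carrier $\{c_{k,j}:k\in[0,h_P],j\in\{0,1,2\}\}$ such that: $c_{0,j}<\dots<c_{h_P,j}$ for each $j$; each $\{c_{k,0},c_{k,1},c_{k,2}\}$ is an antichain; $c_{k,i}<c_{\ell,j}\Rightarrow c_{k,i+1}<c_{\ell,j+1}$ (indices mod 3); and for no $k$ is $P(k)<P(k+1)$ (the latter kind is a section of width three). A section is nice if for all $x<y$: $\{z:z>x\}\not\subseteq\{z:z\ge y\}$ and $\{z:z<y\}\not\subseteq\{z:z\le x\}$. A tower of nice sections is an ordinal sum of nice sections (the decomposition is unique). $\mathfrak N_2$ is the class of nice sections of width three of height $\ge2$ with horizon 2, i.e. $P(k)<P(\ell)$ whenever $\ell\ge k+2$. *)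

(* Finite posets are finite partially ordered types;
   sub-posets (sections, retracts, level unions) are subsets with the
   induced order. *)
From HB Require Import structures.
From mathcomp Require Import all_boot all_order.
Set Implicit Arguments. Unset Strict Implicit. Unset Printing Implicit Defensive.
Import Order.Theory.

Section PosetDefs.
Context {d : Order.disp_t} {T : finPOrderType d}.
Implicit Types (A B P R S : {set T}).

Definition minset A : {set T} := [set x in A | [forall y in A, ~~ (y < x)%O]].

Fixpoint rest A (k : nat) : {set T} :=
  if k is k'.+1 then rest A k' :\: minset (rest A k') else A.

(* level sets: A(0) = min A, A(k+1) = min (A \ U_{i<=k} A(i)) *)
Definition level A (k : nat) : {set T} := minset (rest A k).

Definition levels_between A (k l : nat) : {set T} :=
  \bigcup_(k <= i < l.+1) level A i.

(* height: largest index of a nonempty level (= length of a longest chain minus 1) *)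
Definition height A : nat :=
  (\max_(i < #|T|.+1 | level A i != set0) (i : nat))%N.

Definition set_lt (X Y : {set T}) : bool :=
  [forall x in X, forall y in Y, (x < y)%O].

Definition antichain A : bool := [forall x in A, forall y in A, ~~ (x < y)%O].

Definition width A : nat :=
  (\max_(B : {set T} | (B \subset A) && antichain B) #|B|)%N.

Definition is_section A : Prop :=
  (#|A| = 2 /\ antichain A) \/
  (exists c : nat -> 'I_3 -> T,
     let h := height A in
     [/\ (1 <= h)%N,
         A = ([set c (nat_of_ord k) j | k : 'I_(h.+1), j : 'I_3]),
         (forall k k' j j', (k <= h)%N -> (k' <= h)%N -> c k j = c k' j' ->
              k = k' /\ j = j'),
         (forall k j, (k < h)%N -> (c k j < c k.+1 j)%O) &
       [/\ (forall k i j, (k <= h)%N -> i != j -> ~~ (c k i < c k j)%O),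
         (forall k l i j, (k <= h)%N -> (l <= h)%N -> (c k i < c l j)%O ->
              (c k (ordS i) < c l (ordS j))%O) &
         (forall k, (k < h)%N -> ~~ set_lt (level A k) (level A k.+1))]]).

Definition nice A : Prop :=
  forall x y, x \in A -> y \in A -> (x < y)%O ->
    ~~ ([set z in A | (x < z)%O] \subset [set z in A | (y <= z)%O]) /\
    ~~ ([set z in A | (z < y)%O] \subset [set z in A | (z <= x)%O]).

Definition in_N2 P : Prop :=
  [/\ is_section P, nice P, width P = 3%N, (2 <= height P)%N &
      (forall k l, (k.+2 <= l)%N -> set_lt (level P k) (level P l))].

Definition is_retract R P : Prop :=
  exists f : T -> T,
    [/\ (forall x, x \in P -> f x \in P),
        (forall x y, x \in P -> y \in P -> (x <= y)%O -> (f x <= f y)%O),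
        (forall x, x \in P -> f (f x) = f x) &
        R = f @: P].

Definition tower_decomp R (ss : seq {set T}) : Prop :=
  [/\ R = \bigcup_(S <- ss) S,
      (forall S, S \in ss -> is_section S /\ nice S) &
      (forall i j, (i < j)%N -> (j < size ss)%N ->
          set_lt (nth set0 ss i) (nth set0 ss j))].

End PosetDefs.

From Pilot Require Import Defs.
From HB Require Import structures.
From mathcomp Require Import all_boot all_order zify.
Set Implicit Arguments. Unset Strict Implicit. Unset Printing Implicit Defensive.
Import Order.Theory.

(* Grade S by the depth in P, i.e. the
   index of the level of P containing an element: x < y forces a larger
   depth, and by horizon 2 a depth gap of at least 2 forces x < y.  The
   depths along a row of S differ by at most one.  If a row took two depths,
   the fact that adjacent levels of S are never entirely comparable,
   propagated around the cyclic symmetry of the section, would give two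
   indices at each depth: four distinct indices in 'I_3.  So each row lies
   in one level of P, which it fills as P has width 3, and consecutive rows
   lie in consecutive levels, since otherwise horizon 2 would put one row
   entirely below the next. *)

Section Levels.
Context {d : Order.disp_t} {T : finPOrderType d}.
Implicit Types (A B : {set T}) (x y : T).

Lemma mem_minsetP A x :
  reflect (x \in A /\ forall y, y \in A -> ~~ (y < x)%O) (x \in Defs.minset A).
Proof. by rewrite inE; apply: (iffP andP) => -[xA /forall_inP]. Qed.

Lemma minset_sub A : Defs.minset A \subset A.
Proof. by apply/subsetP => x /mem_minsetP[]. Qed.

(* An element of A with fewest strict predecessors in A is minimal. *)
Lemma minset_neq0 A : A != set0 -> Defs.minset A != set0.
Proof.
case/set0Pn => x0 x0A; pose below x := #|[set y in A | (y < x)%O]|.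
case: (arg_minnP below x0A) => x xA x_min.
apply/set0Pn; exists x; apply/mem_minsetP; split=> // y yA; apply/negP => yx.
have := x_min y yA; rewrite leqNgt => /negP; apply; apply: proper_card.
apply/properP; split; last by exists y; rewrite !inE ?yA ?ltxx ?andbF.
by apply/subsetP => z; rewrite !inE => /andP[-> zy]; exact: lt_trans zy yx.
Qed.

Lemma rest_subset A k l : k <= l -> rest A l \subset rest A k.
Proof.
move/subnK <-; elim: (l - k) => [|n IH] //=.
exact: subset_trans (subsetDl _ _) IH.
Qed.

Lemma card_rest A k : rest A k != set0 -> k + #|rest A k| <= #|A|.
Proof.
elim: k => [|k IH] //= restSk.
have restk : rest A k != set0 by apply: contraNneq restSk => ->; rewrite set0D.
rewrite addSnnS; apply: leq_trans (IH restk); rewrite leq_add2l.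
apply: proper_card; apply/properP; split; first exact: subsetDl.
case/set0Pn: (minset_neq0 restk) => x xmin.
by exists x; [case/mem_minsetP: xmin | rewrite inE xmin].
Qed.

Lemma level_sub A k : level A k \subset A.
Proof. exact: subset_trans (minset_sub _) (rest_subset A (leq0n k)). Qed.

Lemma level_index_lt_card A k x : x \in level A k -> k < #|A|.
Proof.
case/mem_minsetP => xk _; have restk : rest A k != set0 by apply/set0Pn; exists x.
have := card_rest restk; have : 0 < #|rest A k| by rewrite card_gt0.
lia.
Qed.

Lemma level_cover A x : x \in A -> exists k, x \in level A k.
Proof.
move=> xA; suff cover n k : n + k = #|A|.+1 -> x \in rest A k ->
    exists k, x \in level A k by exact: (cover _ 0 (addn0 _)).
elim: n k => [|n IH] k nk xk.
  have restk : rest A k != set0 by apply/set0Pn; exists x.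
  by have := card_rest restk; lia.
case xmin: (x \in Defs.minset (rest A k)); first by exists k.
by apply: (IH k.+1); rewrite ?addnS //= inE xmin.
Qed.

Lemma level_index_lt A a b x y :
  x \in level A a -> y \in level A b -> (x < y)%O -> a < b.
Proof.
case/mem_minsetP => xa _ /mem_minsetP[_ y_min] xy; rewrite ltnNge; apply/negP => ba.
by have := y_min x (subsetP (rest_subset A ba) _ xa); rewrite xy.
Qed.

Lemma antichain_level A k : antichain (level A k).
Proof.
apply/forall_inP => x xk; apply/forall_inP => y yk; apply/negP => xy.
by have := level_index_lt xk yk xy; rewrite ltnn.
Qed.

Lemma width_le_card A : width A <= #|A|.
Proof. by apply/bigmax_leqP => B /andP[BA _]; exact: subset_leq_card. Qed.

Lemma card_le_width A B : B \subset A -> antichain B -> #|B| <= width A.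
Proof. by move=> BA antiB; apply: (leq_bigmax_cond (P := fun B => _ && _)); rewrite BA. Qed.

(* The index of the level of A containing x (junk value 0 if x \notin A). *)
Definition depth A x : nat :=
  if [pick k : 'I_#|T| | x \in level A k] is Some k then val k else 0.

Lemma mem_level_depth A x : x \in A -> x \in level A (depth A x).
Proof.
move=> xA; rewrite /depth; case: pickP => [k //|no_level].
case: (level_cover xA) => k xk.
have kT : k < #|T| := leq_trans (level_index_lt_card xk) (max_card _).
by have := no_level (Ordinal kT); rewrite xk.
Qed.

Lemma depth_lt A x y : x \in A -> y \in A -> (x < y)%O -> depth A x < depth A y.
Proof. by move=> xA yA; apply: level_index_lt; exact: mem_level_depth. Qed.

Lemma depth_gap_lt A x y :
  (forall k l, k.+2 <= l -> set_lt (level A k) (level A l)) ->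
  x \in A -> y \in A -> (depth A x).+2 <= depth A y -> (x < y)%O.
Proof.
move=> horizon xA yA /horizon /forall_inP/(_ x (mem_level_depth xA))/forall_inP.
by apply; exact: mem_level_depth.
Qed.

Lemma levels_betweenP A k l x :
  reflect (exists2 i, k <= i <= l & x \in level A i) (x \in levels_between A k l).
Proof.
rewrite /levels_between big_geq_mkord.
apply: (iffP bigcupP) => [[i /= ki xi]|[i /andP[ki il] xi]].
  by exists i; rewrite // ki -ltnS ltn_ord.
by exists (Ordinal (il : i < l.+1)).
Qed.

Lemma retract_sub (R P : {set T}) : is_retract R P -> R \subset P.
Proof. by case=> f [fP _ _ ->]; apply/subsetP => _ /imsetP[x xP ->]; exact: fP. Qed.

Lemma tower_summand_sub (R : {set T}) ss (S : {set T}) :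
  tower_decomp R ss -> S \in ss -> S \subset R.
Proof. by case=> -> _ _ Sss; rewrite bigcup_seq; exact: bigcup_sup. Qed.

End Levels.

Lemma ord3_shift_row (r : rel 'I_3) i0 :
  (forall i j, r i j -> r (ordS i) (ordS j)) -> (forall j, r i0 j) -> forall i j, r i j.
Proof.
move=> r_shift row_i0; have row_iter n (j : 'I_3) : r (iter n (@ordS 3) i0) j.
  by elim: n j => [|n IH] j //=; rewrite -(ord_predK j); exact: r_shift.
move=> i j; suff [n ->] : exists n, i = iter n (@ordS 3) i0 by [].
by case: i0 {row_i0 row_iter} i => [[|[|[|//]]] ?] [[|[|[|//]]] ?];
  [exists 0|exists 1|exists 2|exists 2|exists 0|exists 1|exists 1|exists 2|exists 0];
  exact/val_inj.
Qed.

Section Grid.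
Context {d : Order.disp_t} {T : finPOrderType d}.
Variables (S : {set T}) (c : nat -> 'I_3 -> T) (h : nat).
Hypothesis S_grid : S = [set c (nat_of_ord k) j | k : 'I_h.+1, j : 'I_3].
Hypothesis c_inj : forall k k' j j', k <= h -> k' <= h -> c k j = c k' j' ->
  k = k' /\ j = j'.
Hypothesis c_lt_succ : forall k j, k < h -> (c k j < c k.+1 j)%O.
Hypothesis row_antichain : forall k i j, k <= h -> i != j -> ~~ (c k i < c k j)%O.

Lemma mem_grid x : x \in S <-> exists k j, k <= h /\ x = c k j.
Proof.
rewrite S_grid; split=> [/imset2P[k j _ _ ->]|[k [j [kh ->]]]].
  by exists k, j; rewrite -ltnS.
by apply/imset2P; exists (Ordinal (kh : k < h.+1)) j.
Qed.

Lemma mem_c k j : k <= h -> c k j \in S.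
Proof. by move=> kh; apply/mem_grid; exists k, j. Qed.

Lemma c_lt_column k k' j : k < k' -> k' <= h -> (c k j < c k' j)%O.
Proof.
elim: k' => [//|k' IH]; rewrite ltnS leq_eqVlt => /orP[/eqP-> | kk'] k'h.
  exact: c_lt_succ.
exact: lt_trans (IH kk' (ltnW k'h)) (c_lt_succ _ k'h).
Qed.

Definition rows_from lo : {set T} :=
  [set x | [exists k : 'I_h.+1, exists j, (lo <= k) && (x == c k j)]].

Lemma mem_rows_from lo x :
  x \in rows_from lo <-> exists k j, lo <= k <= h /\ x = c k j.
Proof.
rewrite inE; split=> [/existsP[k /existsP[j /andP[lok /eqP->]]]|[k [j [/andP[lok kh] ->]]]].
  by exists k, j; rewrite lok -ltnS ltn_ord.
by apply/existsP; exists (Ordinal (kh : k < h.+1)); apply/existsP; exists j; rewrite lok /=.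
Qed.

Lemma minset_rows_from lo : lo <= h ->
  Defs.minset (rows_from lo) = [set c lo j | j : 'I_3].
Proof.
move=> loh; apply/setP => x; apply/mem_minsetP/imsetP.
  case=> /mem_rows_from[k [j [/andP[lok kh] ->]]] x_min; exists j => //.
  case: ltngtP lok => // [lo_k _ | -> //].
  have lo_row : c lo j \in rows_from lo.
    by apply/mem_rows_from; exists lo, j; rewrite leqnn.
  by have := x_min _ lo_row; rewrite c_lt_column.
case=> j _ ->; split; first by apply/mem_rows_from; exists lo, j; rewrite leqnn.
move=> _ /mem_rows_from[k [i [/andP[lok kh] ->]]]; apply/negP => ci_lt_cj.
have row_lt : (c lo i < c lo j)%O.
  case: ltngtP lok ci_lt_cj => // [lo_k _ | -> _ //].
  exact: lt_trans (c_lt_column i lo_k kh).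
have ij : i != j by apply: contraTneq row_lt => ->; rewrite ltxx.
by have := row_antichain loh ij; rewrite row_lt.
Qed.

Lemma rest_grid lo : lo <= h -> rest S lo = rows_from lo.
Proof.
elim: lo => [_|lo IH lo_h] /=; apply/setP => x.
  apply/idP/idP => [/mem_grid[k [j [kh ->]]]|/mem_rows_from[k [j [/andP[_ kh] ->]]]].
    by apply/mem_rows_from; exists k, j.
  by apply/mem_grid; exists k, j.
rewrite IH ?minset_rows_from ?(ltnW lo_h) //; apply/setDP/idP.
  case=> /mem_rows_from[k [j [/andP[lok kh] ->]]] not_row.
  apply/mem_rows_from; exists k, j.
  case: ltngtP lok not_row => [lo_k _ _|//|-> _]; first by rewrite kh.
  by rewrite imset_f.
case/mem_rows_from=> k [j [/andP[lo_k kh] ->]]; split.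
  by apply/mem_rows_from; exists k, j; rewrite ltnW.
apply/imsetP => -[i _ /(c_inj kh (ltnW lo_h))[k_lo _]].
by move: lo_k; rewrite k_lo ltnn.
Qed.

Lemma level_grid k : k <= h -> level S k = [set c k j | j : 'I_3].
Proof. by move=> kh; rewrite /level rest_grid // minset_rows_from. Qed.

Hypothesis c_shift : forall k l i j, k <= h -> l <= h ->
  (c k i < c l j)%O -> (c k (ordS i) < c l (ordS j))%O.
Hypothesis levels_not_lt : forall k, k < h -> ~~ set_lt (level S k) (level S k.+1).

Lemma row_not_lt_succ k : k < h -> ~ (forall i j, (c k i < c k.+1 j)%O).
Proof.
move=> kh all_lt; have := levels_not_lt kh.
rewrite (level_grid (ltnW kh)) (level_grid kh); case/negP.
by apply/forall_inP => _ /imsetP[i _ ->]; apply/forall_inP => _ /imsetP[j _ ->].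
Qed.

Lemma exists_not_lt_succ_right k i : k < h -> exists j, ~~ (c k i < c k.+1 j)%O.
Proof.
move=> kh; apply/existsP; apply: contraT; rewrite negb_exists => /forallP i_below.
case: (row_not_lt_succ kh); apply: (@ord3_shift_row (fun i j => c k i < c k.+1 j)%O i).
  by move=> i' j; apply: c_shift => //; exact: ltnW.
by move=> j; have := i_below j; rewrite negbK.
Qed.

Lemma exists_not_lt_succ_left k j : k < h -> exists i, ~~ (c k i < c k.+1 j)%O.
Proof.
move=> kh; apply/existsP; apply: contraT; rewrite negb_exists => /forallP j_above.
case: (row_not_lt_succ kh) => i j'.
apply: (@ord3_shift_row (fun j i => c k i < c k.+1 j)%O j) => [j1 i1 | i1 //].
  by apply: c_shift => //; exact: ltnW.
by have := j_above i1; rewrite negbK.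
Qed.

Lemma ord3_two_level_pairs (f : 'I_3 -> nat) a x t y u : x != t -> y != u ->
  f x = a -> f t = a -> f y = a.+1 -> f u = a.+1 -> False.
Proof.
have ne i j : f i = a -> f j = a.+1 -> i != j.
  by move=> fi fj; apply/eqP => ij; move: fj; rewrite -ij fi; lia.
move=> xt yu fx ft fy fu.
move: (ne _ _ fx fy) (ne _ _ fx fu) (ne _ _ ft fy) (ne _ _ ft fu) xt yu.
by case: x t y u {fx ft fy fu}
  => [[|[|[|//]]] ?] [[|[|[|//]]] ?] [[|[|[|//]]] ?] [[|[|[|//]]] ?].
Qed.

Hypothesis h_gt0 : 0 < h.

Section Grading.
Variable lv : T -> nat.
Hypothesis lv_lt : forall x y, x \in S -> y \in S -> (x < y)%O -> lv x < lv y.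
Hypothesis lv_gap : forall x y, x \in S -> y \in S -> (lv x).+2 <= lv y -> (x < y)%O.

Lemma lv_not_lt k l i j : k <= h -> l <= h ->
  ~~ (c k i < c l j)%O -> lv (c l j) <= (lv (c k i)).+1.
Proof.
move=> kh lh; apply: contraNT; rewrite -ltnNge; apply: lv_gap; exact: mem_c.
Qed.

Lemma lv_lt_succ k j : k < h -> lv (c k j) < lv (c k.+1 j).
Proof. by move=> kh; apply: lv_lt; rewrite ?mem_c ?c_lt_succ // ltnW. Qed.

Lemma lv_row_le k i j : k <= h -> lv (c k i) <= (lv (c k j)).+1.
Proof.
move=> kh; have [-> | ji] := eqVneq j i; first exact: leqnSn.
exact: lv_not_lt (row_antichain kh ji).
Qed.

Lemma lower_row_flat k x y : k < h -> lv (c k x) < lv (c k y) -> False.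
Proof.
move=> kh lt_xy; have kh' := ltnW kh; set a := lv (c k x).
have fy : lv (c k y) = a.+1 by have := lv_row_le y x kh'; lia.
have [t nt] := exists_not_lt_succ_right x kh.
have [u nu] := exists_not_lt_succ_left y kh.
have xt : x != t by apply: contraNneq nt => <-; exact: c_lt_succ.
have yu : y != u by apply: contraNneq nu => <-; exact: c_lt_succ.
have ft : lv (c k t) = a.
  by have := lv_not_lt kh' kh nt; have := lv_lt_succ t kh; have := lv_row_le y t kh'; lia.
have fu : lv (c k u) = a.+1.
  by have := lv_not_lt kh' kh nu; have := lv_lt_succ y kh; have := lv_row_le u x kh'; lia.
exact: (@ord3_two_level_pairs (fun j => lv (c k j)) a x t y u).
Qed.

Lemma upper_row_flat k x y : k < h -> lv (c k.+1 x) < lv (c k.+1 y) -> False.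
Proof.
move=> kh lt_xy; have kh' := ltnW kh; set a := lv (c k.+1 x).
have fy : lv (c k.+1 y) = a.+1 by have := lv_row_le y x kh; lia.
have [t nt] := exists_not_lt_succ_right x kh.
have [u nu] := exists_not_lt_succ_left y kh.
have xt : x != t by apply: contraNneq nt => <-; exact: c_lt_succ.
have yu : y != u by apply: contraNneq nu => <-; exact: c_lt_succ.
have ft : lv (c k.+1 t) = a.
  by have := lv_not_lt kh' kh nt; have := lv_lt_succ x kh; have := lv_row_le y t kh; lia.
have fu : lv (c k.+1 u) = a.+1.
  by have := lv_not_lt kh' kh nu; have := lv_lt_succ u kh; have := lv_row_le u x kh; lia.
exact: (@ord3_two_level_pairs (fun j => lv (c k.+1 j)) a x t y u).
Qed.

Lemma lv_row_const k i j : k <= h -> lv (c k i) = lv (c k j).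
Proof.
move=> kh; suff flat x y : lv (c k x) < lv (c k y) -> False.
  by case: (ltngtP (lv (c k i)) (lv (c k j))) => // /flat.
move=> lt_xy; case: (ltngtP k h) kh => // [kh _ | hk _].
  exact: lower_row_flat kh lt_xy.
case: k hk lt_xy => [h0 | k hk]; first by move: h_gt0; rewrite -h0.
by apply: upper_row_flat; rewrite hk.
Qed.

Lemma lv_row_succ k : k < h -> lv (c k.+1 ord0) = (lv (c k ord0)).+1.
Proof.
move=> kh; have := lv_lt_succ ord0 kh; rewrite leq_eqVlt => /orP[/eqP <- // | gap].
case: (row_not_lt_succ kh) => i j; apply: lv_gap; rewrite ?mem_c ?(ltnW kh) //.
by rewrite (lv_row_const i ord0 (ltnW kh)) (lv_row_const j ord0 kh).
Qed.

Lemma lv_grid k j : k <= h -> lv (c k j) = lv (c 0 ord0) + k.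
Proof.
move=> kh; rewrite (lv_row_const j ord0 kh).
elim: k kh => [|k IH] kh; first by rewrite addn0.
by rewrite lv_row_succ // IH ?addnS // ltnW.
Qed.
End Grading.

Lemma grid_eq_levels_between P : width P <= 3 ->
  (forall k l, k.+2 <= l -> set_lt (level P k) (level P l)) -> S \subset P ->
  S = levels_between P (depth P (c 0 ord0)) (depth P (c 0 ord0) + h).
Proof.
move=> wP horizon SP; have SP' x : x \in S -> x \in P := subsetP SP x.
have lv_lt x y : x \in S -> y \in S -> (x < y)%O -> depth P x < depth P y.
  by move=> xS yS; apply: depth_lt; exact: SP'.
have lv_gap x y : x \in S -> y \in S -> (depth P x).+2 <= depth P y -> (x < y)%O.
  by move=> xS yS; apply: depth_gap_lt; rewrite ?SP'.
set a := depth P (c 0 ord0).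
have row_level k : k <= h -> level P (a + k) = [set c k j | j : 'I_3].
  move=> kh; apply/esym/eqP; rewrite eqEcard; apply/andP; split.
    apply/subsetP => _ /imsetP[j _ ->]; rewrite -(lv_grid lv_lt lv_gap j kh).
    by apply: mem_level_depth; apply: SP'; exact: mem_c.
  rewrite card_imset ?card_ord; last by move=> i j /(c_inj kh kh)[].
  by apply: leq_trans wP; apply: card_le_width; [exact: level_sub | exact: antichain_level].
apply/setP => x; apply/idP/levels_betweenP.
  move=> /mem_grid[k [j [kh ->]]].
  by exists (a + k); rewrite ?leq_addr ?leq_add2l ?row_level ?imset_f.
case=> i /andP[ai iah]; have iah' : i - a <= h by rewrite leq_subLR.
rewrite -(subnKC ai) row_level // => /imsetP[j _ ->]; exact: mem_c.
Qed.
End Grid.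

Theorem corollary5p1 (d : Order.disp_t) (T : finPOrderType d)
    (P R : {set T}) (ss : seq {set T}) (S : {set T}) :
  in_N2 P ->
  is_retract R P ->
  width R = 3%N ->
  tower_decomp R ss ->
  S \in ss -> is_section S -> nice S -> width S = 3%N ->
  exists k l : nat, (k < l)%N /\ S = levels_between P k l.
Proof.
move=> [_ _ wP _ horizon] retractR _ towerR Sss S_section _ wS.
have SP := subset_trans (tower_summand_sub towerR Sss) (retract_sub retractR).
case: S_section
  => [[cardS _] | [c /= [h_gt0 S_grid c_inj c_lt_succ [c_anti c_shift not_lt]]]].
  by have := width_le_card S; rewrite wS cardS.
exists (depth P (c 0 ord0)), (depth P (c 0 ord0) + height S).
split; first by rewrite -addn1 leq_add2l.
by apply: grid_eq_levels_between; rewrite ?wP.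
Qed.
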